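(* Let $k\ge2$ and let $G=(\{a,b\},\varphi,a)$ be a circular D0L-system with $\varphi$ $k$-uniform. Then the graph of overhangs $GO_G$ does not contain two distinct vertices $s_1,s_2$, each carrying a loop, together with an edge from $s_1$ to $s_2$.
   Context: A D0L-system $G=(\mathcal{A},\varphi,w)$ has $L(G)=\{\varphi^n(w)\}$ and $S(L(G))$ the set of factors of its words. An interpretation of $u\in S(L(G))$ is $(p,v,s)$ with $v\in S(L(G))$, $\varphi(v)=pus$. With $v=v_1\cdots v_n$, $v'=v'_1\cdots v'_m$, $u=u_1\cdots u_\ell$, interpretations $(p,v,s),(p',v',s')$ are synchronized at position $j$ if $\varphi(v_1\cdots v_i)=pu_1\cdots u_j$ and $\varphi(v'_1\cdots v'_{i'})=p'u_1\cdots u_j$ for some $i,i'$; $u$ has a synchronizing point at $j$ if all its interpretations are pairwise synchronized at $j$. A PD0L-system injective on $S(L(G))$ is circular if there is $Z$ such that every $u\in S(L(G))$ with $|u|>Z$ has a synchronizing point. $\varphi$ is $k$-uniform if $|\varphi(a)|=|\varphi(b)|=k$. Let $X=\{\varphi(a),\varphi(b)\}$. An overhang is a triple $(u_1\cdots u_m,v_1\cdots v_n,|x|)$ with $u_i,v_j\in X$, $x$ nonempty, such that: (i) $x$ is a suffix of $u_1\cdots u_m$ but not of $u_2\cdots u_m$; (ii) $x$ is a prefix of $v_1\cdots v_n$ but not of $v_1\cdots v_{n-1}$; (iii) $x\ne u_1\cdots u_m$ or $x\ne v_1\cdots v_n$; (iv) $|v_1\cdots v_{n-1}|<|x(u_2\cdots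 u_m)^{-1}|$. Its left overhang is $u_1\cdots u_mx^{-1}$, right overhang $x^{-1}v_1\cdots v_n$. $GO_G$ has an edge from $s_1$ to $s_2$ labelled by each overhang with left overhang $s_1$ and right overhang $s_2$. *)

From mathcomp Require Import all_boot.
Set Implicit Arguments. Unset Strict Implicit. Unset Printing Implicit Defensive.

Definition word := seq bool.
Definition la : bool := false.
Definition lb : bool := true.

Definition phiw (phi : bool -> word) (w : word) : word := flatten (map phi w).

Definition factor (phi : bool -> word) (w0 u : word) : Prop :=
  exists n, infix u (iter n (phiw phi) w0).

Definition interp (phi : bool -> word) (w0 u p v s : word) : Prop :=
  factor phi w0 v /\ phiw phi v = p ++ u ++ s.

Definition sync_at (phi : bool -> word) (u : word) (j : nat)
  (p v p' v' : word) : Prop :=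
  exists i i', i <= size v /\ i' <= size v' /\
    phiw phi (take i v) = p ++ take j u /\
    phiw phi (take i' v') = p' ++ take j u.

Definition has_sync_point (phi : bool -> word) (w0 u : word) : Prop :=
  exists j, j <= size u /\
    forall p v s p' v' s',
      interp phi w0 u p v s -> interp phi w0 u p' v' s' ->
      sync_at phi u j p v p' v'.

Definition circular (phi : bool -> word) (w0 : word) : Prop :=
  (forall c, phi c <> [::]) /\
  (forall v w, factor phi w0 v -> factor phi w0 w -> phiw phi v = phiw phi w -> v = w) /\
  (exists Z : nat, forall u, factor phi w0 u -> Z < size u -> has_sync_point phi w0 u).

Definition k_uniform (phi : bool -> word) (k : nat) : Prop :=
  size (phi la) = k /\ size (phi lb) = k.

Definition inX (phi : bool -> word) (w : word) : Prop := w = phi la \/ w = phi lb.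

(* (u_1...u_m, v_1...v_n, l) is an overhang, with us = [u_1;...;u_m],
   vs = [v_1;...;v_n] and l = |x| *)
Definition overhang (phi : bool -> word) (us vs : seq word) (l : nat) : Prop :=
  (forall w, w \in us -> inX phi w) /\
  (forall w, w \in vs -> inX phi w) /\
  exists x : word,
    size x = l /\ x <> [::] /\
    suffix x (flatten us) /\ ~~ suffix x (flatten (behead us)) /\
    prefix x (flatten vs) /\ ~~ prefix x (flatten (take (size vs).-1 vs)) /\
    (x <> flatten us \/ x <> flatten vs) /\
    size (flatten (take (size vs).-1 vs)) < size x - size (flatten (behead us)).

(* left overhang u_1...u_m x^{-1} and right overhang x^{-1} v_1...v_n *)
Definition left_overhang (us : seq word) (l : nat) : word :=
  take (size (flatten us) - l) (flatten us).
Definition right_overhang (vs : seq word) (l : nat) : word :=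
  drop l (flatten vs).

Definition GO_edge (phi : bool -> word) (s1 s2 : word) : Prop :=
  exists us vs l, overhang phi us vs l /\
    left_overhang us l = s1 /\ right_overhang vs l = s2.

From mathcomp Require Import all_boot.
From mathcomp Require Import zify.
Set Implicit Arguments. Unset Strict Implicit. Unset Printing Implicit Defensive.

(* For a k-uniform morphism, condition (iv) makes the overlap x longer than all
   of u_2...u_m and v_1...v_{n-1} together, while x fits inside both products;
   this forces m = n = 1, so an edge s -> s' is just a pair of letters with
   phi(c) = s x and phi(d) = x s'.  All such overlaps have the same length, so
   two loops at s1 <> s2 and an edge s1 -> s2 share one overlap x; as the
   alphabet has two letters, {x s1, x s2} = {s1 x, s2 x}, whence s1 and s2 both
   commute with x x and, having the same length, coincide. *)

Lemma eq_cat_size (T : eqType) (s1 s2 t1 t2 : seq T) :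
  s1 ++ t1 = s2 ++ t2 -> size s1 = size s2 -> s1 = s2 /\ t1 = t2.
Proof. by move=> /eqP E Hs; move: E; rewrite eqseq_cat // => /andP[/eqP -> /eqP ->]. Qed.

Lemma eq_catr_size (T : eqType) (s1 s2 t1 t2 : seq T) :
  s1 ++ t1 = s2 ++ t2 -> size t1 = size t2 -> s1 = s2 /\ t1 = t2.
Proof.
move=> E Ht; apply: (eq_cat_size E).
by move/(congr1 size): E; rewrite !size_cat Ht => /addIn.
Qed.

Lemma nth_commute_cat (T : eqType) (x0 : T) (s x : seq T) :
  s ++ x = x ++ s -> 0 < size x ->
  forall i, i < size s -> nth x0 s i = nth x0 x (i %% size x).
Proof.
move=> E Hx; elim/ltn_ind=> i IH Hi.
have := congr1 (fun w => nth x0 w i) E; rewrite /= nth_cat Hi nth_cat.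
case: ltnP => Hix; first by rewrite modn_small.
move=> ->; rewrite IH; [|lia|lia].
by rewrite -{2}(subnK Hix) modnDr.
Qed.

Lemma commute_cat_size_eq (T : eqType) (s s' x : seq T) :
  s ++ x = x ++ s -> s' ++ x = x ++ s' -> 0 < size x ->
  size s = size s' -> s = s'.
Proof.
case: x => // y x' E E' _ Hs; apply: (eq_from_nth (x0 := y)) => // i Hi.
by rewrite (nth_commute_cat _ E) // (nth_commute_cat _ E') // -Hs.
Qed.

(* In the crossed case s1 x x = x s2 x = x x s1. *)
Lemma conj_pair_eq (T : eqType) (s1 s2 x : seq T) :
  0 < size x -> size s1 = size s2 ->
  x ++ s1 \in [:: s1 ++ x; s2 ++ x] -> x ++ s2 \in [:: s1 ++ x; s2 ++ x] ->
  s1 = s2.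
Proof.
move=> Hx Hs; rewrite !inE => /orP[/eqP E1|/eqP E1] /orP[/eqP E2|/eqP E2].
- by case: (eq_cat_size (etrans E1 (esym E2)) erefl).
- by apply: (commute_cat_size_eq (esym E1) (esym E2)).
- apply: (commute_cat_size_eq (x := x ++ x)); rewrite ?size_cat ?addn_gt0 ?Hx //.
  + by rewrite catA -E2 -catA -E1 catA.
  + by rewrite catA -E1 -catA -E2 catA.
- by case: (eq_cat_size (etrans E1 (esym E2)) erefl).
Qed.

Section UniformMorphism.

Variables (phi : bool -> word) (k : nat).
Hypothesis phi_unif : k_uniform phi k.

Lemma size_phi c : size (phi c) = k.
Proof. by case: phi_unif; case: c. Qed.

Lemma size_flatten_inX (ws : seq word) :
  (forall w, w \in ws -> inX phi w) -> size (flatten ws) = k * size ws.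
Proof.
elim: ws => [|w ws IH] H /=; first by rewrite muln0.
rewrite size_cat IH ?mulnS; last by move=> z Hz; apply: H; rewrite inE Hz orbT.
by case: (H w (mem_head _ _)) => ->; rewrite size_phi.
Qed.

Lemma overhang_singletons us vs l :
  overhang phi us vs l -> size us = 1 /\ size vs = 1.
Proof.
move=> [Hus [Hvs [x [_ [Hx0 [Hsuf [_ [Hpre [_ [_ Hiv]]]]]]]]]].
have Hx : 0 < size x by case: x Hx0 {Hsuf Hpre Hiv}.
have Hbeh : forall w, w \in behead us -> inX phi w.
  by move=> w Hw; apply: Hus; case: us Hw {Hsuf Hiv} => //= u us Hw; rewrite inE Hw orbT.
have Htake : forall w, w \in take (size vs).-1 vs -> inX phi w.
  by move=> w /mem_take; apply: Hvs.
have := size_suffix Hsuf; have := size_prefix Hpre.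
rewrite (size_flatten_inX Hbeh) (size_flatten_inX Htake) in Hiv.
rewrite !size_flatten_inX // size_behead size_take in Hiv *.
case: (size vs) Hiv => [|n]; case: (size us) => [|m] //=; try lia.
rewrite ltnSn; nia.
Qed.

Lemma GO_edge_letters s s' : GO_edge phi s s' ->
  exists c d x, phi c = s ++ x /\ phi d = x ++ s' /\ 0 < size x.
Proof.
move=> [us [vs [l [Hov [<- <-]]]]].
have [] := overhang_singletons Hov.
case: us Hov => [|u [|]] //; case: vs => [|v [|]] // Hov _ _.
move: Hov => [Hu [Hv [x [<- [Hx0 [/suffixP[w Eu] [_ [/prefixP[w' Ev] _]]]]]]]].
rewrite /left_overhang /right_overhang /= !cats0 in Eu Ev *.
have letter (z : word) : inX phi z -> exists c, phi c = z.
  by case=> ->; [exists la | exists lb].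
have [c Ec] := letter u (Hu u (mem_head _ _)).
have [d Ed] := letter v (Hv v (mem_head _ _)).
exists c, d, x; rewrite Ec Ed Eu Ev size_cat addnK take_size_cat // drop_size_cat //.
by split=> //; split=> //; case: x Hx0 {Eu Ev}.
Qed.

Lemma GO_edge_size s s' : GO_edge phi s s' -> size s = size s'.
Proof.
case/GO_edge_letters=> c [d [x [Ec [Ed _]]]].
by move: (size_phi c) (size_phi d); rewrite Ec Ed !size_cat; lia.
Qed.

End UniformMorphism.

Section LetterImages.

Variables (A T : eqType) (f : A -> seq T).

Lemma image_prefix_neq c c' s s' x x' :
  f c = s ++ x -> f c' = s' ++ x' -> size s = size s' -> s <> s' -> c != c'.
Proof.
move=> Ec Ec' Hs Hne; apply/eqP=> e; apply: Hne.
by rewrite e Ec' in Ec; case: (eq_cat_size Ec (esym Hs)).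
Qed.

Lemma image_suffix_neq d d' s s' x x' :
  f d = x ++ s -> f d' = x' ++ s' -> size s = size s' -> s <> s' -> d != d'.
Proof.
move=> Ed Ed' Hs Hne; apply/eqP=> e; apply: Hne.
by rewrite e Ed' in Ed; case: (eq_catr_size Ed (esym Hs)).
Qed.

End LetterImages.

Lemma bool_neq_neq (a b c : bool) : a != b -> c != b -> c = a.
Proof. by case: a; case: b; case: c. Qed.

Lemma mem_two_letters (T : eqType) (f : bool -> T) (a b c : bool) :
  a != b -> f c \in [:: f a; f b].
Proof. by case: a; case: b; case: c; rewrite !inE eqxx ?orbT. Qed.

Theorem mainTheorem8 (k : nat) (phi : bool -> word) :
  2 <= k -> k_uniform phi k -> circular phi [:: la] ->
  ~ (exists s1 s2 : word, s1 <> s2 /\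
       GO_edge phi s1 s1 /\ GO_edge phi s2 s2 /\ GO_edge phi s1 s2).
Proof.
move=> _ Hu _ [s1 [s2 [Hne [E1 [E2 E3]]]]].
have [c1 [d1 [x [U1 [V1 Hx]]]]] := GO_edge_letters Hu E1.
have [c2 [d2 [x2 [U2 [V2 _]]]]] := GO_edge_letters Hu E2.
have [c3 [d3 [x3 [U3 [V3 _]]]]] := GO_edge_letters Hu E3.
have Ss := GO_edge_size Hu E3.
have c12 : c1 != c2 := image_prefix_neq U1 U2 Ss Hne.
have d21 : d2 != d1 := image_suffix_neq V2 V1 (esym Ss) (nesym Hne).
have ec3 : c3 = c1 := bool_neq_neq c12 (image_prefix_neq U3 U2 Ss Hne).
have ed3 : d3 = d2 := bool_neq_neq d21 (image_suffix_neq V3 V1 (esym Ss) (nesym Hne)).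
have ex3 : x3 = x by move: U3; rewrite ec3 U1 => /eq_cat_size[] // _ ->.
have ex2 : x3 = x2 by move: V3; rewrite ed3 V2 => /eq_catr_size[] // ->.
subst x2 x3; apply: Hne; apply: (conj_pair_eq Hx Ss).
- by rewrite -V1 -U1 -U2; exact: mem_two_letters.
- by rewrite -V2 -U1 -U2; exact: mem_two_letters.
Qed.
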